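(* Let $V\subseteq\mathcal{V}$ be a set of interpretations and consider $\sigma\in\{\mathrm{adm},\mathrm{com},\mathrm{mod}\}$. There is an ADF $D$ such that $\sigma(D)=V$ if and only if there is a $\sigma$-characterization for $V$.
   Context: Let $A$ be a fixed finite set of statements. An interpretation is a mapping $v:A\to\{\mathbf{t},\mathbf{f},\mathbf{u}\}$; $\mathcal{V}$ is the set of all interpretations and $\mathcal{V}_2$ the set of two-valued ones. The information ordering is $\mathbf{u}<_i\mathbf{t}$, $\mathbf{u}<_i\mathbf{f}$, extended pointwise. For $v\in\mathcal{V}$, $[v]_2$ is the set of two-valued interpretations $w$ with $v\leq_i w$. An ADF is $D=(A,L,C)$ where each statement $a$ has an acceptance formula $\varphi_a$ over its parents. The operator $\Gamma_D$ maps $v$ to the interpretation assigning to each $a$ the greatest lower bound w.r.t. $\leq_i$ (consensus: $\mathbf{t}$ if all are $\mathbf{t}$, $\mathbf{f}$ if all are $\mathbf{f}$, otherwise $\mathbf{u}$) of $\{w(\varphi_a)\mid w\in[v]_2\}$. $v$ is admissible iff $v\leq_i\Gamma_D(v)$, complete iff $\Gamma_D(v)=v$, a two-valued model iff it is two-valued and $\Gamma_D(v)=v$; these sets are $\mathrm{adm}(D),\mathrm{com}(D),\mathrm{mod}(D)$. For $f:\mathcal{V}_2\to\mathcal{V}_2$: - $f$ is an adm-characterization of $V$ iff for each $v\in\mathcal{V}$: $v\in V$ iff for every $a\in A$, $v(a)\neq\mathbf{u}$ implies $f(v_2)(a)=v(a)$ for all $v_2\in[v]_2$. - $f$ is a com-characterization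 of $V$ iff for each $v\in\mathcal{V}$: $v\in V$ iff for every $a\in A$, $v(a)\neq\mathbf{u}$ implies $f(v_2)(a)=v(a)$ for all $v_2\in[v]_2$, and $v(a)=\mathbf{u}$ implies $f(v_2')(a)=\mathbf{t}$ and $f(v_2'')(a)=\mathbf{f}$ for some $v_2',v_2''\in[v]_2$. - $f$ is a mod-characterization of $V$ iff $V\subseteq\mathcal{V}_2$ and for each $v\in\mathcal{V}_2$, $v\in V$ iff $f(v)=v$. *)

From mathcomp Require Import all_boot.
Set Implicit Arguments. Unset Strict Implicit. Unset Printing Implicit Defensive.

Definition tv := option bool.
Notation vt := (Some true).
Notation vf := (Some false).
Notation vu := (@None bool).

Section ADF.
Variable A : finType.

Definition interp := {ffun A -> tv}.
Definition interp2 := {ffun A -> bool}.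

Definition to3 (w : interp2) : interp := [ffun a => Some (w a)].

Definition leq_i (v v' : interp) : bool :=
  [forall a, (v a != vu) ==> (v a == v' a)].

Definition ext2 (v : interp) (w : interp2) : bool := leq_i v (to3 w).

Inductive formula : Type :=
| FAtom of A
| FTop
| FBot
| FNeg of formula
| FAnd of formula & formula
| FOr of formula & formula
| FImp of formula & formula.

Fixpoint feval (w : interp2) (phi : formula) : bool :=
  match phi with
  | FAtom a => w a
  | FTop => true
  | FBot => false
  | FNeg p => ~~ feval w p
  | FAnd p q => feval w p && feval w q
  | FOr p q => feval w p || feval w q
  | FImp p q => feval w p ==> feval w q
  end.

Fixpoint atoms (phi : formula) : seq A :=
  match phi with
  | FAtom a => [:: a]
  | FTop | FBot => [::]
  | FNeg p => atoms p
  | FAnd p q | FOr p q | FImp p q => atoms p ++ atoms q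
  end.

(* An ADF D = (A, L, C): links L (L b a means (b,a) \in L, i.e. b is a parent
   of a) and, for each statement a, an acceptance formula over its parents. *)
Record ADF : Type := MkADF {
  links : rel A;
  acc : A -> formula;
  acc_parents : forall a b, b \in atoms (acc a) -> links b a
}.

(* Consensus (glb w.r.t. <=_i) of {w(phi) | w \in [v]_2}. *)
Definition Gamma (D : ADF) (v : interp) : interp :=
  [ffun a =>
     if [forall w : interp2, ext2 v w ==> feval w (acc D a)] then vt
     else if [forall w : interp2, ext2 v w ==> ~~ feval w (acc D a)] then vf
     else vu].

Definition two_valued (v : interp) : bool := [forall a, v a != vu].

Definition adm (D : ADF) : {set interp} := [set v | leq_i v (Gamma D v)].
Definition com (D : ADF) : {set interp} := [set v | Gamma D v == v].
Definition mod (D : ADF) : {set interp} :=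
  [set v | two_valued v && (Gamma D v == v)].

Definition adm_char (f : interp2 -> interp2) (V : {set interp}) : Prop :=
  forall v : interp, v \in V <->
    (forall a, v a != vu -> forall w, ext2 v w -> Some (f w a) = v a).

Definition com_char (f : interp2 -> interp2) (V : {set interp}) : Prop :=
  forall v : interp, v \in V <->
    (forall a,
       (v a != vu -> forall w, ext2 v w -> Some (f w a) = v a) /\
       (v a = vu -> (exists w', ext2 v w' /\ f w' a = true) /\
                    (exists w'', ext2 v w'' /\ f w'' a = false))).

Definition mod_char (f : interp2 -> interp2) (V : {set interp}) : Prop :=
  (forall v, v \in V -> two_valued v) /\
  (forall w : interp2, to3 w \in V <-> f w = w).

End ADF.

Inductive semantics := Adm | Com | Mod.

Definition sem (A : finType) (s : semantics) (D : ADF A) : {set interp A} :=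
  match s with Adm => adm D | Com => com D | Mod => mod D end.

Definition is_char (A : finType) (s : semantics) (f : interp2 A -> interp2 A)
  (V : {set interp A}) : Prop :=
  match s with Adm => adm_char f V | Com => com_char f V | Mod => mod_char f V end.

From mathcomp Require Import all_boot.
Set Implicit Arguments. Unset Strict Implicit. Unset Printing Implicit Defensive.

(* An ADF D determines the map f_D on two-valued interpretations with
   f_D(w)(a) = w(phi_a), and Gamma_D(v)(a) is the consensus of f_D(w)(a) over
   w in [v]_2; reading off the three semantics in these terms gives exactly the
   three characterization conditions for f_D.  Conversely, every
   f : V_2 -> V_2 is f_D for the ADF whose acceptance formula for a is the
   disjunctive normal form of the set {w | f(w)(a) = t}. *)

Section Interpretations.
Variable A : finType.
Implicit Types (v : interp A) (w : interp2 A).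

Lemma leq_iP v v' : leq_i v v' <-> forall a, v a != vu -> v a = v' a.
Proof.
split=> [/forallP le_vv' a | le_vv'].
- by move/implyP: (le_vv' a) => le_a /le_a /eqP.
- by apply/forallP=> a; apply/implyP=> /le_vv' ->.
Qed.

Lemma ext2P v w : ext2 v w <-> forall a, v a != vu -> v a = Some (w a).
Proof.
split=> [/leq_iP ext_vw a /ext_vw | ext_vw]; first by rewrite ffunE.
by apply/leq_iP=> a /ext_vw; rewrite ffunE.
Qed.

Lemma ext2_exists v : exists w, ext2 v w.
Proof.
exists [ffun a => if v a is Some b then b else true]; apply/ext2P=> a.
by rewrite ffunE; case: (v a).
Qed.

Lemma to3_inj : injective (@to3 A).
Proof.
move=> w w' /ffunP eq_ww'; apply/ffunP=> a.
by have := eq_ww' a; rewrite !ffunE => -[].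
Qed.

Lemma ext2_to3 w0 w : ext2 (to3 w0) w <-> w = w0.
Proof.
split=> [ext_w | ->]; last by apply/ext2P=> a; rewrite ffunE.
apply/ffunP=> a; move/ext2P: ext_w => /(_ a).
by rewrite !ffunE => /(_ isT) [].
Qed.

Lemma two_valuedP v : two_valued v <-> exists w, v = to3 w.
Proof.
split=> [/forallP def_v | [w ->]]; last by apply/forallP=> a; rewrite ffunE.
exists [ffun a => if v a is Some b then b else true].
by apply/ffunP=> a; rewrite !ffunE; move: (def_v a); case: (v a).
Qed.

End Interpretations.

Section CharacterizationConditions.
Variable A : finType.
Implicit Types (f : interp2 A -> interp2 A) (v : interp A).

Definition adm_cond f v : Prop :=
  forall a, v a != vu -> forall w, ext2 v w -> Some (f w a) = v a.

Definition com_cond f v : Prop :=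
  forall a,
    (v a != vu -> forall w, ext2 v w -> Some (f w a) = v a) /\
    (v a = vu -> (exists w', ext2 v w' /\ f w' a = true) /\
                 (exists w'', ext2 v w'' /\ f w'' a = false)).

Definition mod_cond f v : Prop := exists w, v = to3 w /\ f w = w.

Definition char_cond (s : semantics) :=
  match s with Adm => adm_cond | Com => com_cond | Mod => mod_cond end.

Lemma is_charP s f (V : {set interp A}) :
  is_char s f V <-> forall v, v \in V <-> char_cond s f v.
Proof.
case: s => //=; split=> [[V_two V_fix] v | V_mod].
- split=> [/[dup] /V_two /two_valuedP [w ->] /V_fix | [w [-> /V_fix //]]].
  by exists w.
- split=> [v /V_mod [w [-> _]] | w]; first by apply/two_valuedP; exists w.
  split=> [/V_mod [w' [/to3_inj -> //]] | fix_w]; by apply/V_mod; exists w.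
Qed.

End CharacterizationConditions.

Section SemanticsOfAnADF.
Variables (A : finType) (D : ADF A) (f : interp2 A -> interp2 A).
Hypothesis f_acc : forall w a, f w a = feval w (acc D a).
Implicit Types (v : interp A) (w : interp2 A).

Lemma Gamma_Some v a b :
  Gamma D v a = Some b <-> forall w, ext2 v w -> f w a = b.
Proof.
have [w0 ext_w0] := ext2_exists v.
rewrite /Gamma ffunE.
case: forallP => [all_t | not_all_t].
  split=> [[<-] w ext_w | all_b]; first by rewrite f_acc (implyP (all_t w)).
  by rewrite -(all_b w0) // f_acc (implyP (all_t w0)).
case: forallP => [all_f | not_all_f].
  split=> [[<-] w ext_w | all_b]; first by rewrite f_acc (negbTE (implyP (all_f w) ext_w)).
  by rewrite -(all_b w0) // f_acc (negbTE (implyP (all_f w0) ext_w0)).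
split=> // all_b; case: b all_b => all_b.
- by case: not_all_t => w; apply/implyP=> /all_b; rewrite f_acc.
- by case: not_all_f => w; apply/implyP=> /all_b; rewrite f_acc => ->.
Qed.

Lemma Gamma_None v a :
  Gamma D v a = vu <->
  (exists w', ext2 v w' /\ f w' a = true) /\ (exists w'', ext2 v w'' /\ f w'' a = false).
Proof.
rewrite /Gamma ffunE.
case: (boolP [forall w, _ ==> _]) => [/forallP all_t | /forallPn [w0]].
  split=> // -[_ [w [ext_w]]].
  by rewrite f_acc (implyP (all_t w) ext_w).
rewrite negb_imply => /andP [ext_w0 not_t].
case: (boolP [forall w, _ ==> _]) => [/forallP all_f | /forallPn [w1]].
  split=> // -[[w [ext_w t_w]] _]; move: t_w.
  by rewrite f_acc (negbTE (implyP (all_f w) ext_w)).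
rewrite negb_imply negbK => /andP [ext_w1 is_t].
by split=> // _; split; [exists w1 | exists w0]; rewrite f_acc ?(negbTE not_t).
Qed.

Lemma Gamma_fixed_defined v a :
  v a != vu -> Gamma D v a = v a <-> forall w, ext2 v w -> Some (f w a) = v a.
Proof.
case: (v a) => [b _ | //].
split=> [/Gamma_Some all_b w /all_b -> // | all_b].
by apply/Gamma_Some=> w /all_b [].
Qed.

Lemma mem_adm v : v \in adm D <-> adm_cond f v.
Proof.
rewrite inE; split=> [/leq_iP fix_v a def_a | cond_v].
  by apply/(Gamma_fixed_defined def_a); rewrite fix_v.
by apply/leq_iP=> a def_a; apply/esym/(Gamma_fixed_defined def_a)/cond_v.
Qed.

Lemma mem_com v : v \in com D <-> com_cond f v.
Proof.
rewrite inE; split=> [/eqP fix_v a | cond_v].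
  split=> [def_a | undef_a]; last by apply/Gamma_None; rewrite fix_v.
  by apply/(Gamma_fixed_defined def_a); rewrite fix_v.
apply/eqP/ffunP=> a; have [cond_def cond_undef] := cond_v a.
have [undef_a | def_a] := eqVneq (v a) vu.
  by rewrite undef_a; apply/Gamma_None/cond_undef.
exact/(Gamma_fixed_defined def_a)/cond_def.
Qed.

Lemma Gamma_to3 w : Gamma D (to3 w) = to3 (f w).
Proof. by apply/ffunP=> a; rewrite [RHS]ffunE; apply/Gamma_Some=> w' /ext2_to3 ->. Qed.

Lemma mem_mod v : v \in mod D <-> mod_cond f v.
Proof.
rewrite inE; split=> [/andP [/two_valuedP [w ->]] | [w [-> fix_w]]].
  by rewrite Gamma_to3 => /eqP /to3_inj fix_w; exists w.
apply/andP; split; first by apply/two_valuedP; exists w.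
by rewrite Gamma_to3 fix_w.
Qed.

Lemma mem_sem s v : v \in sem s D <-> char_cond s f v.
Proof. by case: s; [apply: mem_adm | apply: mem_com | apply: mem_mod]. Qed.

End SemanticsOfAnADF.

Section NormalForms.
Variable A : finType.
Implicit Types (w u : interp2 A) (s : seq (formula A)).

Definition big_and s : formula A := foldr (@FAnd A) (FTop A) s.
Definition big_or s : formula A := foldr (@FOr A) (FBot A) s.

Lemma feval_big_and w s : feval w (big_and s) = all (feval w) s.
Proof. by elim: s => //= phi s ->. Qed.

Lemma feval_big_or w s : feval w (big_or s) = has (feval w) s.
Proof. by elim: s => //= phi s ->. Qed.

Definition literal u (b : A) : formula A :=
  if u b then FAtom b else FNeg (FAtom b).

Definition point_formula u : formula A := big_and [seq literal u b | b <- enum A].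

Lemma feval_point_formula w u : feval w (point_formula u) = (w == u).
Proof.
rewrite feval_big_and all_map; apply/allP/eqP => [eq_wu | -> b _].
  apply/ffunP=> b; have := eq_wu b (mem_enum A b).
  by rewrite /= /literal; case: (u b) => /=; case: (w b).
by rewrite /= /literal; case: ifP => /= ->.
Qed.

Definition dnf (P : pred (interp2 A)) : formula A :=
  big_or [seq point_formula u | u <- enum P].

Lemma feval_dnf w P : feval w (dnf P) = P w.
Proof.
rewrite feval_big_or has_map; apply/hasP/idP => [[u] | Pw].
  by rewrite mem_enum /= feval_point_formula => Pu /eqP ->.
by exists w; rewrite ?mem_enum //= feval_point_formula.
Qed.

Definition adf_of (f : interp2 A -> interp2 A) : ADF A :=
  @MkADF A [rel _ _ | true] (fun a => dnf (fun w => f w a)) (fun _ _ _ => isT).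

Lemma feval_adf_of f w a : feval w (acc (adf_of f) a) = f w a.
Proof. exact: feval_dnf. Qed.

End NormalForms.

Theorem theorem1 (A : finType) (V : {set interp A}) (s : semantics) :
  (exists D : ADF A, sem s D = V) <-> (exists f : interp2 A -> interp2 A, is_char s f V).
Proof.
split=> [[D <-] | [f /is_charP char_f]].
  exists (fun w => [ffun a => feval w (acc D a)]); apply/is_charP=> v.
  by apply: mem_sem => w a; rewrite ffunE.
have mem_adf_of := mem_sem (fun w a => esym (feval_adf_of f w a)) s.
exists (adf_of f); apply/setP=> v.
by apply/idP/idP => [/mem_adf_of /char_f | /char_f /mem_adf_of].
Qed.
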